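(* Consider the time-invariant noiseless affine system $x(t+1)=Ax(t)+Bu(t)+s$ with $(A,B)$ controllable, and a collected trajectory $\tilde x(0:L-1)$, $\tilde u(0:L-1)$ of this system with $\tilde u$ persistently exciting of order $n+(T+1)+1$. Consider the problem $$\min_{\mathbf{x},\mathbf{u},G,\hat g} J(\mathbf{x},\mathbf{u})\quad\text{s.t.}\quad \begin{bmatrix}\mathbf{x}\\ \mathbf{u}\end{bmatrix}=\begin{bmatrix} H_{T+1}(\tilde x)\\ H_{T+1}(\tilde u)\end{bmatrix}\begin{bmatrix} G-\hat g\mathbf{1}_n^\top & \hat g\end{bmatrix}\begin{bmatrix} x_0\\ 1\end{bmatrix},\ \ G\in\Gamma(\tilde x),\ \hat g\in\Lambda(\tilde x),$$ $$\mathcal{H}_x\mathbf{x}+\mathcal{H}_u\mathbf{u}\le\mathbf{h},\quad x_0=x(0),\quad x_T\in\mathcal{X}_T.\qquad (\mathrm{P}_3)$$ Then a sequence $(x^*_{0:T},u^*_{0:T})$ is an optimal solution (in its $(\mathbf{x},\mathbf{u})$ components) of $(\mathrm{P}_3)$ if and only if it is an optimal solution of the MPC problem $$\min_{u_{0:T},x_{0:T}} J(u_{0:T},x_{0:T})\ \text{s.t.}\ x_{t+1}=Ax_t+Bu_t+s,\ H_xx_t+H_uu_t\le h\ (t\in[0,T]),\ x_0=x(0),\ x_T\in\mathcal{X}_T.$$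
   Context: Cost $J(u_{0:T},x_{0:T})=\|Px_T\|_p+\sum_{t=0}^{T-1}(\|Qx_t\|_p+\|Ru_t\|_p)$, $p\in\{1,2,\infty\}$; for $p=2$, $Q=Q^\top\succeq0$, $R=R^\top\succ0$, $P=P^\top\succeq0$; for $p\in\{1,\infty\}$, $Q,P,R$ full rank. $H_x\in\mathbb{R}^{d\times n}$, $H_u\in\mathbb{R}^{d\times m}$, $h\in\mathbb{R}^d$; $\mathcal{X}_T$ polyhedral; $\mathcal{H}_x=\mathrm{diag}(H_x,\dots,H_x)$, $\mathcal{H}_u=\mathrm{diag}(H_u,\dots,H_u)$ ($T+1$ copies), $\mathbf{h}=[h^\top,\dots,h^\top]^\top$; $\mathbf{x}=[x_0^\top,\dots,x_T^\top]^\top$, $\mathbf{u}=[u_0^\top,\dots,u_T^\top]^\top$. For a signal $\sigma(0:N-1)$ with values in $\mathbb{R}^p$, the Hankel matrix of depth $k$ is the $pk\times(N-k+1)$ matrix whose $(i,j)$ block is $\sigma(i+j)$; $\sigma$ is persistently exciting of order $k$ if $H_k(\sigma)$ has full (row) rank. $H_1(\tilde x)$ is the first $n$ rows of $H_{T+1}(\tilde x)$. $\Gamma(\tilde x)=\{G\in\mathbb{R}^{(L-T)\times n}: H_1(\tilde x)G=I_n,\ \mathbf{1}_{L-T}^\top G=\mathbf{1}_n^\top\}$, $\Lambda(\tilde x)=\{\hat g\in\mathbb{R}^{L-T}: H_1(\tilde x)\hat g=\mathbf{0}_n,\ \mathbf{1}_{L-T}^\top\hat g=1\}$. *)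

From HB Require Import structures.
From mathcomp Require Import all_boot all_order all_algebra.
Unset Printing Implicit Defensive.
Import Order.TTheory GRing.Theory Num.Theory.
Local Open Scope ring_scope.

Section Defs.
Variable R : rcfType.

(* total nat-indexed entry access (0 outside the range) *)
Definition mget (a b : nat) (M : 'M[R]_(a, b)) (i j : nat) : R :=
  match @insub _ (fun k => k < a)%N ('I_a) i, @insub _ (fun k => k < b)%N ('I_b) j with
  | Some i', Some j' => M i' j'
  | _, _ => 0
  end.
Definition vget (k : nat) (v : 'cV[R]_k) (r : nat) : R := mget k 1 v r 0.

Definition lev (k : nat) (u v : 'cV[R]_k) : Prop := forall i, u i 0 <= v i 0.

(* Hankel matrix of depth k of a signal sig(0:N-1) with values in R^p:
   the (pk) x (N-k+1) matrix whose (i,j) block is sig(i+j). *)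
Definition hankel (p k N : nat) (sig : nat -> 'cV[R]_p) : 'M[R]_(k * p, N - k + 1) :=
  \matrix_(r, c) vget p (sig (r %/ p + c)%N) (r %% p).

Definition pers_exc (p k N : nat) (sig : nat -> 'cV[R]_p) : bool :=
  row_free (hankel p k N sig).

Definition ctrb_mx (n m : nat) (A : 'M[R]_n) (B : 'M[R]_(n, m)) : 'M[R]_(n, n * m) :=
  \matrix_(i, j) mget n m (A ^+ (j %/ m) *m B) i (j %% m).
Definition controllable (n m : nat) (A : 'M[R]_n) (B : 'M[R]_(n, m)) : Prop :=
  \rank (ctrb_mx n m A B) = n.

Definition blk (T n : nat) (v : 'cV[R]_(T.+1 * n)) (t : nat) : 'cV[R]_n :=
  \col_i vget (T.+1 * n) v (t * n + i)%N.

Definition bdiag (T a b : nat) (M : 'M[R]_(a, b)) : 'M[R]_(T.+1 * a, T.+1 * b) :=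
  \matrix_(r, c) (if (r %/ a == c %/ b)%N then mget a b M (r %% a) (c %% b) else 0).
Definition bstack (T a : nat) (h : 'cV[R]_a) : 'cV[R]_(T.+1 * a) :=
  \col_r vget a h (r %% a).

Inductive pnorm_kind := P1 | P2 | Pinf.
Definition pnorm (p : pnorm_kind) (k : nat) (v : 'cV[R]_k) : R :=
  match p with
  | P1 => \sum_i `|v i 0|
  | P2 => Num.sqrt (\sum_i (v i 0) ^+ 2)
  | Pinf => \big[Num.max/0]_i `|v i 0|
  end.

Definition psd (k : nat) (M : 'M[R]_k) : Prop := forall v : 'cV[R]_k, 0 <= (v^T *m M *m v) 0 0.
Definition pd (k : nat) (M : 'M[R]_k) : Prop :=
  forall v : 'cV[R]_k, v != 0 -> 0 < (v^T *m M *m v) 0 0.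
Definition weights_ok (p : pnorm_kind) (n m : nat)
  (Q : 'M[R]_n) (Rw : 'M[R]_m) (P : 'M[R]_n) : Prop :=
  match p with
  | P2 => [/\ Q^T = Q /\ psd n Q, Rw^T = Rw /\ pd m Rw & P^T = P /\ psd n P]
  | _ => [/\ \rank Q = n, \rank Rw = m & \rank P = n]
  end.

Definition cost (p : pnorm_kind) (n m T : nat) (Q : 'M[R]_n) (Rw : 'M[R]_m) (P : 'M[R]_n)
  (xs : 'cV[R]_(T.+1 * n)) (us : 'cV[R]_(T.+1 * m)) : R :=
  pnorm p n (P *m blk T n xs T) +
  \sum_(t < T) (pnorm p n (Q *m blk T n xs t) + pnorm p m (Rw *m blk T m us t)).

(* H_1(x~): first n rows of H_{T+1}(x~) *)
Definition hankel1 (n T L : nat) (xd : nat -> 'cV[R]_n) : 'M[R]_(n, L - T.+1 + 1) :=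
  \matrix_(i, c) vget n (xd c) i.

Definition Gamma_set (n T L : nat) (xd : nat -> 'cV[R]_n) (G : 'M[R]_(L - T.+1 + 1, n)) : Prop :=
  hankel1 n T L xd *m G = 1%:M /\ (const_mx 1 : 'rV[R]_(L - T.+1 + 1)) *m G = const_mx 1.
Definition Lambda_set (n T L : nat) (xd : nat -> 'cV[R]_n) (g : 'cV[R]_(L - T.+1 + 1)) : Prop :=
  hankel1 n T L xd *m g = 0 /\ (const_mx 1 : 'rV[R]_(L - T.+1 + 1)) *m g = 1.

(* feasibility for the data-driven problem (P3), in the (x,u) components *)
Definition feasP3 (n m d q T L : nat) (xd : nat -> 'cV[R]_n) (ud : nat -> 'cV[R]_m)
  (Hx : 'M[R]_(d, n)) (Hu : 'M[R]_(d, m)) (h : 'cV[R]_d)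
  (F : 'M[R]_(q, n)) (f : 'cV[R]_q) (xinit : 'cV[R]_n)
  (xs : 'cV[R]_(T.+1 * n)) (us : 'cV[R]_(T.+1 * m)) : Prop :=
  exists (G : 'M[R]_(L - T.+1 + 1, n)) (g : 'cV[R]_(L - T.+1 + 1)),
    [/\ col_mx xs us =
          col_mx (hankel n T.+1 L xd) (hankel m T.+1 L ud)
            *m row_mx (G - g *m const_mx 1) g *m col_mx (blk T n xs 0) (const_mx 1),
        Gamma_set n T L xd G /\ Lambda_set n T L xd g,
        lev (T.+1 * d) (bdiag T d n Hx *m xs + bdiag T d m Hu *m us) (bstack T d h),
        blk T n xs 0 = xinit & lev q (F *m blk T n xs T) f].

Definition feasMPC (n m d q T : nat) (A : 'M[R]_n) (B : 'M[R]_(n, m)) (s : 'cV[R]_n)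
  (Hx : 'M[R]_(d, n)) (Hu : 'M[R]_(d, m)) (h : 'cV[R]_d)
  (F : 'M[R]_(q, n)) (f : 'cV[R]_q) (xinit : 'cV[R]_n)
  (xs : 'cV[R]_(T.+1 * n)) (us : 'cV[R]_(T.+1 * m)) : Prop :=
  [/\ forall t : nat, (t < T)%N -> blk T n xs t.+1 = A *m blk T n xs t + B *m blk T m us t + s,
      forall t : nat, (t <= T)%N -> lev d (Hx *m blk T n xs t + Hu *m blk T m us t) h,
      blk T n xs 0 = xinit & lev q (F *m blk T n xs T) f].

Definition optimal (a b : nat) (feas : 'cV[R]_a -> 'cV[R]_b -> Prop)
  (J : 'cV[R]_a -> 'cV[R]_b -> R) (xs : 'cV[R]_a) (us : 'cV[R]_b) : Prop :=
  feas xs us /\ forall xs' us', feas xs' us' -> J xs us <= J xs' us'.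

End Defs.

Arguments mget {R a b} M i j.
Arguments vget {R k} v r.
Arguments lev {R k} u v.
Arguments hankel {R p} k N sig.
Arguments pers_exc {R p} k N sig.
Arguments ctrb_mx {R n m} A B.
Arguments controllable {R n m} A B.
Arguments blk {R} T n v t.
Arguments bdiag {R} T {a b} M.
Arguments bstack {R} T {a} h.
Arguments pnorm {R} p {k} v.
Arguments psd {R k} M.
Arguments pd {R k} M.
Arguments weights_ok {R} p {n m} Q Rw P.
Arguments cost {R} p {n m} T Q Rw P xs us.
Arguments hankel1 {R n} T L xd.
Arguments Gamma_set {R n} T L xd G.
Arguments Lambda_set {R n} T L xd g.
Arguments feasP3 {R n m d q} T L xd ud Hx Hu h F f xinit xs us.
Arguments feasMPC {R n m d q} T A B s Hx Hu h F f xinit xs us.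
Arguments optimal {R a b} feas J xs us.

From HB Require Import structures.
From mathcomp Require Import all_boot all_order all_algebra.
From mathcomp Require Import zify.
Set Implicit Arguments.
Unset Strict Implicit.
Unset Printing Implicit Defensive.
Import Order.TTheory GRing.Theory Num.Theory.
Local Open Scope ring_scope.

(* Both problems have the same cost, so it suffices that they have the same
   feasible set.  A feasible point of (P3) is an affine combination (weights
   summing to 1) of the columns of the Hankel data matrices, hence a trajectory
   of the affine system.  Conversely, an affine version of Willems' fundamental
   lemma says that [H_1(x~); H_(T+1)(u~); 1^T] has full row rank, so every model
   trajectory is such a combination, and G in Gamma, g in Lambda are read off
   from a right inverse.  Full row rank is proved on the left kernel: a kernel
   vector is a linear relation among data windows; shifting it n times along
   the dynamics and combining the shifts with the coefficients of the
   characteristic polynomial (Cayley-Hamilton) eliminates the state, leaving a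
   relation among inputs plus a constant that persistent excitation forces to
   vanish; controllability then kills the state part. *)


(** * Block and Hankel matrices *)

Lemma big_ord_blocks (S : Type) (idx : S) (op : Monoid.law idx) {k m : nat} (F : nat -> S) :
  \big[op/idx]_(r < k * m) F r = \big[op/idx]_(i < k) \big[op/idx]_(a < m) F (i * m + a)%N.
Proof.
elim: k => [|k IH]; first by rewrite mul0n !big_ord0.
by rewrite big_ord_recr /= -IH mulSnr big_split_ord.
Qed.

Lemma divmodn_blk (i a m : nat) :
  (a < m)%N -> ((i * m + a) %/ m = i /\ (i * m + a) %% m = a)%N.
Proof.
move=> lt_am; have m_gt0 : (0 < m)%N by apply: leq_ltn_trans lt_am.
by rewrite divnMDl // divn_small // addn0 modnMDl modn_small.
Qed.

Lemma blk_index_lt (t k a p : nat) : (t < k)%N -> (a < p)%N -> (t * p + a < k * p)%N.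
Proof. by move=> lt_tk lt_ap; nia. Qed.

Lemma blk_index_cover (K k : nat) (r : 'I_(K * k)) :
  exists t (e : 'I_k), (t < K)%N /\ val r = (t * k + e)%N.
Proof.
have k_gt0 : (0 < k)%N by case: k r => [|//] r; rewrite muln0 in r; case: r.
exists (r %/ k)%N, (Ordinal (ltn_pmod r k_gt0)); split; last exact: divn_eq.
by rewrite ltn_divLR.
Qed.

Section BlockMatrices.
Variable R : rcfType.
Implicit Types T a b k : nat.

Lemma mget_ord a b (M : 'M[R]_(a, b)) i j (lt_ia : (i < a)%N) (lt_jb : (j < b)%N) :
  mget M i j = M (Ordinal lt_ia) (Ordinal lt_jb).
Proof. by rewrite /mget (insubT (fun k => k < a)%N lt_ia) (insubT (fun k => k < b)%N lt_jb). Qed.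

Lemma mgetE a b (M : 'M[R]_(a, b)) (i : 'I_a) (j : 'I_b) : mget M i j = M i j.
Proof. by rewrite (mget_ord M (ltn_ord i) (ltn_ord j)); congr (M _ _); apply: val_inj. Qed.

Lemma mget_out_col a b (M : 'M[R]_(a, b)) i j : (b <= j)%N -> mget M i j = 0.
Proof. by move=> le_bj; rewrite /mget; case: insub => // ?; rewrite insubF // ltnNge le_bj. Qed.

Lemma mget0 a b i j : mget (0 : 'M[R]_(a, b)) i j = 0.
Proof.
by rewrite /mget; case: (@insub _ _ 'I_a i) => [?|//]; case: (@insub _ _ 'I_b j) => [?|//];
  rewrite mxE.
Qed.

Lemma mgetD a b (M N : 'M[R]_(a, b)) i j : mget (M + N) i j = mget M i j + mget N i j.
Proof.
by rewrite /mget; case: (@insub _ _ 'I_a i) => [?|]; case: (@insub _ _ 'I_b j) => [?|];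
  rewrite ?mxE ?addr0.
Qed.

Lemma vgetE k (v : 'cV[R]_k) (r : 'I_k) : vget v r = v r 0.
Proof.
by rewrite /vget (mget_ord v (ltn_ord r) (ltn0Sn 0)); congr (v _ _); apply: val_inj.
Qed.

Lemma blkE T k (v : 'cV[R]_(T.+1 * k)) t (e : 'I_k) (r : 'I_(T.+1 * k)) :
  val r = (t * k + e)%N -> blk T k v t e 0 = v r 0.
Proof. by move=> Er; rewrite mxE -Er vgetE. Qed.

Lemma blk_ord T k (v : 'cV[R]_(T.+1 * k)) t (e : 'I_k) (le_tT : (t <= T)%N) :
  blk T k v t e 0 = v (Ordinal (blk_index_lt (le_tT : (t < T.+1)%N) (ltn_ord e))) 0.
Proof. exact: blkE. Qed.

Lemma eq_blk T k (v w : 'cV[R]_(T.+1 * k)) :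
  (forall t, (t <= T)%N -> blk T k v t = blk T k w t) -> v = w.
Proof.
move=> Evw; apply/colP => r; have [t [e [le_tT Er]]] := blk_index_cover r.
by rewrite -!(blkE _ Er) Evw.
Qed.

Lemma lev_blk T k (v w : 'cV[R]_(T.+1 * k)) :
  lev v w <-> (forall t, (t <= T)%N -> lev (blk T k v t) (blk T k w t)).
Proof.
split=> [le_vw t le_tT e | le_vw r].
  by rewrite !(blk_ord _ _ le_tT).
by have [t [e [le_tT Er]]] := blk_index_cover r; rewrite -!(blkE _ Er); exact: le_vw.
Qed.

Lemma blkD T k (v w : 'cV[R]_(T.+1 * k)) t : blk T k (v + w) t = blk T k v t + blk T k w t.
Proof. by apply/colP => e; rewrite !mxE /vget mgetD. Qed.

Lemma blk_bstack T a (h : 'cV[R]_a) t : (t <= T)%N -> blk T a (bstack T h) t = h.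
Proof.
move=> le_tT; apply/colP => e.
rewrite (blk_ord _ _ le_tT) mxE /=.
by have [_ ->] := divmodn_blk t (ltn_ord e); rewrite vgetE.
Qed.

Lemma blk_bdiag_mul T a b (M : 'M[R]_(a, b)) (v : 'cV[R]_(T.+1 * b)) t :
  (t <= T)%N -> blk T a (bdiag T M *m v) t = M *m blk T b v t.
Proof.
move=> le_tT; apply/colP => e.
rewrite (blk_ord _ _ le_tT).
rewrite !mxE; under eq_bigr do rewrite mxE /= -vgetE.
have [-> ->] := divmodn_blk t (ltn_ord e).
rewrite (big_ord_blocks +%R
  (fun c => (if t == (c %/ b)%N then mget M e (c %% b)%N else 0) * vget v c)).
rewrite (bigD1 (Ordinal (le_tT : (t < T.+1)%N))) //= [X in _ + X]big1 ?addr0.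
  apply: eq_bigr => c _; have [-> ->] := divmodn_blk t (ltn_ord c).
  by rewrite eqxx !mxE mgetE.
move=> i /eqP ne_it; apply: big1 => c _; have [-> _] := divmodn_blk i (ltn_ord c).
by case: eqP => [Eti|]; [case: ne_it; apply: val_inj | rewrite mul0r].
Qed.

Lemma lev_bdiag T d n m (Hx : 'M[R]_(d, n)) (Hu : 'M[R]_(d, m)) (h : 'cV[R]_d)
    (xs : 'cV[R]_(T.+1 * n)) (us : 'cV[R]_(T.+1 * m)) :
  lev (bdiag T Hx *m xs + bdiag T Hu *m us) (bstack T h) <->
  (forall t, (t <= T)%N -> lev (Hx *m blk T n xs t + Hu *m blk T m us t) h).
Proof.
rewrite lev_blk; split=> le_xu t le_tT; have := le_xu t le_tT;
  by rewrite blkD !blk_bdiag_mul ?blk_bstack.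
Qed.

Lemma blk_hankel_mul T L p (sig : nat -> 'cV[R]_p) (al : 'cV[R]_(L - T.+1 + 1)) t :
  (t <= T)%N -> blk T p (hankel T.+1 L sig *m al) t = \sum_j al j 0 *: sig (t + j)%N.
Proof.
move=> le_tT; apply/colP => e.
rewrite (blk_ord _ _ le_tT).
rewrite !mxE summxE; apply: eq_bigr => j _; rewrite !mxE /=.
by have [-> ->] := divmodn_blk t (ltn_ord e); rewrite vgetE mulrC.
Qed.

Lemma hankel1_mul T L n (xd : nat -> 'cV[R]_n) (al : 'cV[R]_(L - T.+1 + 1)) :
  hankel1 T L xd *m al = \sum_j al j 0 *: xd j.
Proof.
apply/colP => e; rewrite !mxE summxE.
by apply: eq_bigr => j _; rewrite !mxE vgetE mulrC.
Qed.

Lemma blk0_hankel_mul T L n (xd : nat -> 'cV[R]_n) (al : 'cV[R]_(L - T.+1 + 1)) :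
  blk T n (hankel T.+1 L xd *m al) 0 = hankel1 T L xd *m al.
Proof. by rewrite blk_hankel_mul // hankel1_mul. Qed.

Definition row_blk K m (w : 'rV[R]_(K * m)) (i : nat) : 'rV[R]_m :=
  \row_a mget w 0 (i * m + a)%N.

Lemma row_blk_out K m (w : 'rV[R]_(K * m)) i : (K <= i)%N -> row_blk w i = 0.
Proof. by move=> le_Ki; apply/rowP => a; rewrite !mxE mget_out_col //; nia. Qed.

Lemma row_blk_eq0 K m (w : 'rV[R]_(K * m)) :
  (forall i, (i < K)%N -> row_blk w i = 0) -> w = 0.
Proof.
move=> w0; apply/rowP => r; have [i [a [lt_iK Er]]] := blk_index_cover r.
have /rowP/(_ a) := w0 i lt_iK; rewrite !mxE -Er => <-.
by rewrite (mgetE w ord0 r).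
Qed.

Lemma row_blk_surj K m (th : nat -> 'rV[R]_m) :
  exists w : 'rV[R]_(K * m), forall i, (i < K)%N -> row_blk w i = th i.
Proof.
exists (\row_r mget (th (r %/ m)%N) 0 (r %% m)%N) => i lt_iK; apply/rowP => a.
rewrite mxE (mget_ord _ (ltn0Sn 0) (blk_index_lt lt_iK (ltn_ord a))) mxE /=.
by have [-> ->] := divmodn_blk i (ltn_ord a); rewrite (mgetE _ ord0).
Qed.

Lemma col_mulmx a b c (M : 'M[R]_(a, b)) (N : 'M[R]_(b, c)) (j : 'I_c) :
  col j (M *m N) = M *m col j N.
Proof. by apply/colP => i; rewrite !mxE; apply: eq_bigr => k _; rewrite mxE. Qed.

Lemma colD a b (M N : 'M[R]_(a, b)) (j : 'I_b) : col j (M + N) = col j M + col j N.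
Proof. by apply/colP => i; rewrite !mxE. Qed.

Lemma const_mx11 : const_mx 1 = 1 :> 'M[R]_1.
Proof. by apply/rowP => o; rewrite (ord1 o) !mxE. Qed.

Lemma ones_mul_sum N (al : 'cV[R]_N) : const_mx 1 *m al = 1 -> \sum_j al j 0 = 1.
Proof.
move=> /rowP/(_ 0); rewrite !mxE eqxx mulr1n => <-.
by apply: eq_bigr => j _; rewrite mxE mul1r.
Qed.

Lemma col_hankel1 T L n (xd : nat -> 'cV[R]_n) (j : 'I_(L - T.+1 + 1)) :
  col j (hankel1 T L xd) = xd j.
Proof. by apply/colP => i; rewrite !mxE vgetE. Qed.

Lemma row_blk_hankel K L m (sig : nat -> 'cV[R]_m) (w : 'rV[R]_(K * m)) (j : 'I_(L - K + 1)) :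
  w *m col j (hankel K L sig) = \sum_(i < K) row_blk w i *m sig (j + i)%N.
Proof.
apply/rowP => o; rewrite (ord1 o) !mxE summxE.
under eq_bigr => r _ do rewrite !mxE -[w 0 r](mgetE w ord0 r).
rewrite (big_ord_blocks +%R (fun r => mget w 0 r * vget (sig (r %/ m + j)%N) (r %% m)%N)).
apply: eq_bigr => i _; rewrite mxE; apply: eq_bigr => a _; rewrite !mxE.
by have [-> ->] := divmodn_blk i (ltn_ord a); rewrite vgetE (addnC i).
Qed.

Lemma pers_exc_window_eq0 K L m (ud : nat -> 'cV[R]_m) (th : nat -> 'rV[R]_m) :
  pers_exc K L ud ->
  (forall j, (j < L - K + 1)%N -> \sum_(i < K) th i *m ud (j + i)%N = 0) ->
  forall i, (i < K)%N -> th i = 0.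
Proof.
move=> pe_ud win0; have [w Ew] := row_blk_surj K th.
have w0 : w = 0.
  apply: (row_free_inj pe_ud); rewrite mul0mx; apply/rowP => j.
  have := row_blk_hankel ud w j; rewrite (eq_bigr (fun i : 'I_K => th i *m ud (j + i)%N)).
    by rewrite win0 // -col_mulmx => /rowP/(_ 0); rewrite mxE => ->; rewrite !mxE.
  by move=> i _; rewrite Ew.
by move=> i lt_iK; rewrite -Ew // w0; apply/rowP => a; rewrite !mxE mget0.
Qed.

Lemma Cayley_Hamilton_row n (A : 'M[R]_n) (xi : 'rV[R]_n) :
  \sum_(i < n.+1) (char_poly A)`_i *: (xi *m A ^+ i) = 0.
Proof.
case: n A xi => [|n] A xi; first by rewrite [xi]thinmx0 big1 // => i _; rewrite mul0mx scaler0.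
under eq_bigr do rewrite scalemxAr; rewrite -mulmx_sumr.
suff -> : \sum_(i < n.+2) (char_poly A)`_i *: A ^+ i = 0 by rewrite mulmx0.
apply: etrans (Cayley_Hamilton A).
rewrite /horner_mx /horner_morph horner_coef size_map_poly size_char_poly.
by apply: eq_bigr => i _; rewrite coef_map /= -mul_scalar_mx.
Qed.

Lemma char_poly_coef_n n (A : 'M[R]_n) : (char_poly A)`_n = 1.
Proof. by have /monicP := char_poly_monic A; rewrite /lead_coef size_char_poly. Qed.

Lemma controllable_row_eq0 n m (A : 'M[R]_n) (B : 'M[R]_(n, m)) (xi : 'rV[R]_n) :
  controllable A B -> (forall k, (k < n)%N -> xi *m A ^+ k *m B = 0) -> xi = 0.
Proof.
move=> ctrl_AB xiAB0; have free_ctrb : row_free (ctrb_mx A B) by rewrite /row_free ctrl_AB.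
apply: (row_free_inj free_ctrb); rewrite mul0mx; apply/rowP => j; rewrite [RHS]mxE.
have [k [a [lt_kn Ej]]] := blk_index_cover j.
transitivity ((xi *m A ^+ k *m B) 0 a); last by rewrite xiAB0 // mxE.
rewrite -mulmxA !mxE; apply: eq_bigr => i _; rewrite mxE Ej.
by have [-> ->] := divmodn_blk k (ltn_ord a); rewrite mgetE.
Qed.

End BlockMatrices.

Lemma monic_recurrence_eq0 (K : pzRingType) (V : lmodType K) (p : nat -> K) n N (v : nat -> V) :
  p n = 1 -> (forall e, (N <= e)%N -> v e = 0) ->
  (forall e, (e < N)%N -> \sum_(i < n.+1) p i *: v (n + e - i)%N = 0) ->
  forall e, v e = 0.
Proof.
move=> pn1 v0 rec e; suff : forall k e, (N - e <= k)%N -> v e = 0 by apply; exact: leqnn.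
elim=> [|k IH] {}e le_k; first by apply: v0; lia.
case: (leqP N e) => [/v0 // | lt_eN].
have := rec e lt_eN; rewrite big_ord_recr /= addKn pn1 scale1r big1 ?add0r // => i _.
by rewrite IH ?scaler0 //; have := ltn_ord i; lia.
Qed.

(** * Relations among data windows *)

Section AffineData.
Variables (R : rcfType) (n m L : nat).
Variables (A : 'M[R]_n) (B : 'M[R]_(n, m)) (s : 'cV[R]_n).
Variables (xd : nat -> 'cV[R]_n) (ud : nat -> 'cV[R]_m).
Hypothesis traj : forall t, (t.+1 < L)%N -> xd t.+1 = A *m xd t + B *m ud t + s.

Lemma hankel_mul_traj T (al : 'cV[R]_(L - T.+1 + 1)) t :
  (T.+1 <= L)%N -> const_mx 1 *m al = 1 -> (t < T)%N ->
  blk T n (hankel T.+1 L xd *m al) t.+1 =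
  A *m blk T n (hankel T.+1 L xd *m al) t + B *m blk T m (hankel T.+1 L ud *m al) t + s.
Proof.
move=> le_TL /ones_mul_sum sum_al1 lt_tT; rewrite !blk_hankel_mul ?(ltnW lt_tT) //.
rewrite !mulmx_sumr -[s]scale1r -sum_al1 scaler_suml -!big_split /=.
apply: eq_bigr => j _; have lt_tjL : ((t + j).+1 < L)%N by have := ltn_ord j; lia.
by rewrite addSn traj // !scalerDr -!scalemxAr.
Qed.

(* A left-kernel vector (xi, th_0, ..., th_(D-1), c) of the first J columns of
   the depth-D data matrix [H_1(x~); H_D(u~); 1^T]. *)
Definition window_rel D J (xi : 'rV[R]_n) (th : nat -> 'rV[R]_m) (c : 'M[R]_1) : Prop :=
  forall j, (j < J)%N -> xi *m xd j + \sum_(i < D) th i *m ud (j + i)%N + c = 0.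

Lemma window_rel_le D J J' xi th c :
  (J' <= J)%N -> window_rel D J xi th c -> window_rel D J' xi th c.
Proof. by move=> le_J rel j lt_j; apply: rel; apply: leq_trans le_J. Qed.

Lemma eq_window_rel D J xi th th' c :
  th =1 th' -> window_rel D J xi th c -> window_rel D J xi th' c.
Proof.
move=> Eth rel j lt_j; rewrite -[RHS](rel j lt_j).
by congr (_ + _ + _); apply: eq_bigr => i _; rewrite Eth.
Qed.

Lemma window_rel_widen K D J xi th c :
  (forall l, (K <= l)%N -> th l = 0) -> (K <= D)%N ->
  window_rel K J xi th c -> window_rel D J xi th c.
Proof.
move=> th0 le_KD rel j lt_j; rewrite -[RHS](rel j lt_j); congr (_ + _ + _).
rewrite (big_ord_widen D (fun i => th i *m ud (j + i)%N) le_KD) [RHS]big_mkcond /=.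
apply: eq_bigr => i _; case: ltnP => // le_Ki.
by rewrite th0 // mul0mx.
Qed.

Lemma window_rel_lincomb D J k (a : 'I_k -> R) xi th c :
  (forall i, window_rel D J (xi i) (th i) (c i)) ->
  window_rel D J (\sum_i a i *: xi i) (fun l => \sum_i a i *: th i l) (\sum_i a i *: c i).
Proof.
move=> rel j lt_j; rewrite mulmx_suml.
under [X in _ + X + _]eq_bigr do rewrite mulmx_suml.
rewrite exchange_big -!big_split /= big1 // => i _.
under eq_bigr do rewrite -scalemxAl.
by rewrite -scalemxAl -scaler_sumr -!scalerDr rel // scaler0.
Qed.

Lemma window_rel_shift D J xi th c :
  (J.+1 <= L)%N -> th D = 0 -> window_rel D.+1 J.+1 xi th c ->
  window_rel D.+1 J (xi *m A) (fun l => if l is l'.+1 then th l' else xi *m B) (xi *m s + c).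
Proof.
move=> le_JL thD0 rel j lt_jJ; have := rel j.+1 lt_jJ.
rewrite traj; last by lia.
rewrite big_ord_recr /= thD0 mul0mx addr0 !mulmxDr !mulmxA big_ord_recl /= addn0.
move=> rel1; rewrite -[RHS]rel1 !addrA; congr (_ + _); rewrite addrAC; congr (_ + _ + _).
by apply: eq_bigr => i _; rewrite add0n /bump leq0n add1n addSnnS.
Qed.

(* The sequence xi A^(n-1) B, ..., xi A B, xi B, eta_0, eta_1, ...: shifting the
   relation (xi, eta) i times along the dynamics gives it the input
   coefficients shift_coef (n + l - i), l = 0, 1, ... *)
Definition shift_coef (xi : 'rV[R]_n) (eta : nat -> 'rV[R]_m) (e : nat) : 'rV[R]_m :=
  if (e < n)%N then xi *m A ^+ (n - e.+1) *m B else eta (e - n)%N.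

Lemma window_rel_iter K J xi eta c i :
  (forall l, (K < l)%N -> eta l = 0) -> (n < J)%N -> (J <= L)%N -> (i <= n)%N ->
  window_rel (n + K)%N.+1 J xi eta c ->
  window_rel (n + K)%N.+1 (J - i) (xi *m A ^+ i) (fun l => shift_coef xi eta (n + l - i)%N)
    (\sum_(l < i) xi *m A ^+ l *m s + c).
Proof.
move=> eta0 lt_nJ le_JL; elim: i => [_ rel0 | i IH lt_in rel0].
  rewrite subn0 big_ord0 add0r expr0 mulmx1; apply: eq_window_rel rel0 => l.
  by rewrite /shift_coef subn0 ltnNge leq_addr addKn.
have rel_i := IH (ltnW lt_in) rel0.
rewrite (_ : J - i = (J - i.+1).+1)%N in rel_i; last by lia.
have top0 : shift_coef xi eta (n + (n + K) - i)%N = 0.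
  by rewrite /shift_coef ifF; [apply: eta0 | apply/negbTE]; lia.
have le_JL' : ((J - i.+1).+1 <= L)%N by lia.
have rel_next :=
  window_rel_shift (th := fun l => shift_coef xi eta (n + l - i)%N) le_JL' top0 rel_i.
have -> : xi *m A ^+ i.+1 = xi *m A ^+ i *m A by rewrite exprSr -mulmxA.
have -> : \sum_(l < i.+1) xi *m A ^+ l *m s + c =
          xi *m A ^+ i *m s + (\sum_(l < i) xi *m A ^+ l *m s + c).
  by rewrite big_ord_recr /= -addrA addrCA.
apply: eq_window_rel rel_next => -[|l].
  rewrite /shift_coef addn0 ifT; last by lia.
  by rewrite (_ : n - (n - i.+1).+1 = i)%N //; lia.
by rewrite addnS subSS.
Qed.

Lemma window_rel_char_poly K J xi eta c :
  (forall l, (K < l)%N -> eta l = 0) -> (n < J)%N -> (J <= L)%N ->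
  window_rel (n + K)%N.+1 J xi eta c ->
  exists c', window_rel (n + K)%N.+1 (J - n) 0
    (fun l => \sum_(i < n.+1) (char_poly A)`_i *: shift_coef xi eta (n + l - i)%N) c'.
Proof.
move=> eta0 lt_nJ le_JL rel0.
have rel_i (i : 'I_n.+1) := window_rel_le (leq_sub2l J (ltn_ord i : i <= n)%N)
  (window_rel_iter eta0 lt_nJ le_JL (ltn_ord i) rel0).
have := window_rel_lincomb (fun i : 'I_n.+1 => (char_poly A)`_i) rel_i.
by rewrite Cayley_Hamilton_row; eexists; eassumption.
Qed.

Lemma pers_exc_window_rel D th c :
  pers_exc D.+1 L ud -> (D.+1 <= L)%N -> window_rel D (L - D).+1 0 th c ->
  (forall i, (i < D)%N -> th i = 0) /\ c = 0.
Proof.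
move=> pe_ud le_DL rel.
have win j : (j <= L - D)%N -> \sum_(i < D) th i *m ud (j + i)%N = - c.
  by move=> le_j; apply/eqP; rewrite -addr_eq0; have := rel j le_j; rewrite mul0mx add0r => ->.
(* Consecutive windows carry the same constant, so their difference is a
   relation among inputs alone, of depth D + 1. *)
pose dth l := (if l is l'.+1 then th l' else 0) - (if (l < D)%N then th l else 0).
have dth0 : forall i, (i < D.+1)%N -> dth i = 0.
  apply: (pers_exc_window_eq0 pe_ud) => j lt_j.
  rewrite /dth; under eq_bigr do rewrite mulmxBl.
  rewrite sumrB big_ord_recl big_ord_recr /= mul0mx add0r ltnn mul0mx addr0.
  rewrite [X in X - _](eq_bigr (fun i : 'I_D => th i *m ud (j.+1 + i)%N)) => [|i _]; last first.
    by rewrite /bump leq0n add1n addSnnS.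
  rewrite [X in _ - X](eq_bigr (fun i : 'I_D => th i *m ud (j + i)%N)) => [|i _]; last first.
    by rewrite /= ltn_ord.
  by rewrite !win ?subrr //; lia.
have th0 : forall i, (i < D)%N -> th i = 0.
  elim=> [|i IH] lt_iD.
    by have := dth0 0%N (ltn0Sn _); rewrite /dth lt_iD sub0r => /eqP; rewrite oppr_eq0 => /eqP.
  have := dth0 i.+1 (ltnW lt_iD); rewrite /dth lt_iD IH ?(ltnW lt_iD) // sub0r.
  by move=> /eqP; rewrite oppr_eq0 => /eqP.
split=> //; have := win 0%N (leq0n _); rewrite big1 => [/eqP|i _]; last by rewrite th0 ?mul0mx.
by rewrite eq_sym oppr_eq0 => /eqP.
Qed.

Lemma window_rel_eq0 K xi eta c :
  controllable A B -> (n + K.+1 + 1 <= L)%N -> pers_exc (n + K.+1 + 1) L ud ->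
  (forall l, (K < l)%N -> eta l = 0) -> window_rel K.+1 (L - K.+1 + 1) xi eta c ->
  [/\ xi = 0, forall l, eta l = 0 & c = 0].
Proof.
move=> ctrl_AB le_L pe_ud eta0 rel0.
have rel_pad : window_rel (n + K)%N.+1 (L - K.+1 + 1) xi eta c.
  by apply: window_rel_widen eta0 _ rel0; lia.
have lt_n : (n < L - K.+1 + 1)%N by lia.
have le_JL : (L - K.+1 + 1 <= L)%N by lia.
have [c' rel_char] := window_rel_char_poly eta0 lt_n le_JL rel_pad.
rewrite (_ : L - K.+1 + 1 - n = (L - (n + K)%N.+1).+1)%N in rel_char; last by lia.
have pe_ud' : pers_exc (n + K)%N.+2 L ud by rewrite -addnS -addn1.
have le_nKL : ((n + K)%N.+2 <= L)%N by lia.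
have [coef0 _] := pers_exc_window_rel pe_ud' le_nKL rel_char.
have coef_out e : ((n + K)%N.+1 <= e)%N -> shift_coef xi eta e = 0.
  by move=> le_e; rewrite /shift_coef ifF; [apply: eta0 | apply/negbTE]; lia.
have z0 := monic_recurrence_eq0 (char_poly_coef_n A) coef_out coef0.
have eta_0 l : eta l = 0 by have := z0 (n + l)%N; rewrite /shift_coef ltnNge leq_addr addKn.
have xi0 : xi = 0.
  apply: (controllable_row_eq0 ctrl_AB) => k lt_kn; have := z0 (n - k.+1)%N.
  rewrite /shift_coef ifT; last by lia.
  by rewrite (_ : n - (n - k.+1).+1 = k)%N //; lia.
have lt_0J : (0 < L - K.+1 + 1)%N by lia.
split=> //; have := rel0 0%N lt_0J; rewrite xi0 mul0mx add0r big1 ?add0r // => i _.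
by rewrite eta_0 mul0mx.
Qed.

(** * Equivalence of the two problems *)

Lemma row_free_data_mx T :
  controllable A B -> (n + T.+1 + 1 <= L)%N -> pers_exc (n + T.+1 + 1) L ud ->
  row_free (col_mx (col_mx (hankel1 T L xd) (hankel T.+1 L ud))
                   (const_mx 1 : 'rV[R]_(L - T.+1 + 1))).
Proof.
move=> ctrl_AB le_L pe_ud; apply: inj_row_free => w w0.
rewrite -[w]hsubmxK -[lsubmx w]hsubmxK in w0 *.
move: (lsubmx (lsubmx w)) (rsubmx (lsubmx w)) (rsubmx w) w0 => wx wu wc.
rewrite !mul_row_col => w0.
have rel : window_rel T.+1 (L - T.+1 + 1) wx (row_blk wu) wc.
  move=> j lt_j; have := congr1 (col (Ordinal lt_j)) w0.
  by rewrite col0 !colD !col_mulmx col_hankel1 row_blk_hankel col_const const_mx11 mulmx1.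
have [-> eta0 ->] := window_rel_eq0 ctrl_AB le_L pe_ud (@row_blk_out _ _ _ wu) rel.
by rewrite (row_blk_eq0 (fun i _ => eta0 i)) !row_mx0.
Qed.

Lemma data_mx_solvable T k (b1 : 'M[R]_(n, k)) (b2 : 'M[R]_(T.+1 * m, k)) (b3 : 'M[R]_(1, k)) :
  controllable A B -> (n + T.+1 + 1 <= L)%N -> pers_exc (n + T.+1 + 1) L ud ->
  exists Y, [/\ hankel1 T L xd *m Y = b1, hankel T.+1 L ud *m Y = b2 & const_mx 1 *m Y = b3].
Proof.
move=> ctrl_AB le_L pe_ud; have [X HX] := row_freeP (row_free_data_mx ctrl_AB le_L pe_ud).
exists (X *m col_mx (col_mx b1 b2) b3).
have := congr1 (mulmx^~ (col_mx (col_mx b1 b2) b3)) HX.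
by rewrite /= -mulmxA mul1mx !mul_col_mx => /eq_col_mx[/eq_col_mx[]].
Qed.

Lemma traj_hankel_comb T (xs : 'cV[R]_(T.+1 * n)) (us : 'cV[R]_(T.+1 * m)) :
  controllable A B -> (n + T.+1 + 1 <= L)%N -> pers_exc (n + T.+1 + 1) L ud ->
  (forall t, (t < T)%N -> blk T n xs t.+1 = A *m blk T n xs t + B *m blk T m us t + s) ->
  exists al, [/\ hankel T.+1 L xd *m al = xs, hankel T.+1 L ud *m al = us
               & const_mx 1 *m al = 1].
Proof.
move=> ctrl_AB le_L pe_ud dyn.
have [al [al_x0 al_u al_1]] := data_mx_solvable (blk T n xs 0) us 1 ctrl_AB le_L pe_ud.
exists al; split=> //; apply: eq_blk; elim=> [_ | t IH lt_tT]; first by rewrite blk0_hankel_mul.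
by rewrite hankel_mul_traj ?IH ?(ltnW lt_tT) ?al_u ?dyn //; lia.
Qed.

End AffineData.

Section AffineParametrization.
Variables (R : rcfType) (N n : nat).
Local Notation ones := (const_mx 1 : 'rV[R]_N).

Lemma affine_param_sum1 (G : 'M[R]_(N, n)) (g : 'cV[R]_N) (x0 : 'cV[R]_n) :
  ones *m G = const_mx 1 -> ones *m g = 1 ->
  ones *m ((G - g *m const_mx 1) *m x0 + g) = 1.
Proof.
by move=> G1 g1; rewrite mulmxDr !mulmxA mulmxBr G1 mulmxA g1 mul1mx subrr mul0mx add0r.
Qed.

Lemma affine_param_exists (H1 : 'M[R]_(n, N)) (M : 'M[R]_(N, n))
    (al : 'cV[R]_N) (x0 : 'cV[R]_n) :
  H1 *m M = 1%:M -> ones *m M = 0 -> H1 *m al = x0 -> ones *m al = 1 ->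
  exists G g, [/\ H1 *m G = 1%:M /\ ones *m G = const_mx 1,
                  H1 *m g = 0 /\ ones *m g = 1
                & (G - g *m const_mx 1) *m x0 + g = al].
Proof.
move=> HM1 M0 Hal al1; set g := al - M *m x0.
have Hg : H1 *m g = 0 by rewrite mulmxBr Hal mulmxA HM1 mul1mx subrr.
have g1 : ones *m g = 1 by rewrite mulmxBr al1 mulmxA M0 mul0mx subr0.
exists (M + g *m const_mx 1), g; split=> //; first split.
- by rewrite mulmxDr HM1 mulmxA Hg mul0mx addr0.
- by rewrite mulmxDr M0 mulmxA g1 mul1mx add0r.
- by rewrite addrK addrC subrK.
Qed.

End AffineParametrization.

Lemma optimal_iff (R : rcfType) a b (feas1 feas2 : 'cV[R]_a -> 'cV[R]_b -> Prop)
    (J : 'cV[R]_a -> 'cV[R]_b -> R) xs us :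
  (forall xs us, feas1 xs us <-> feas2 xs us) ->
  optimal feas1 J xs us <-> optimal feas2 J xs us.
Proof. by move=> E; split=> -[/E feas opt]; split=> // xs' us' /E; apply: opt. Qed.

Lemma feasP3_iff_feasMPC (R : rcfType) (n m d q T L : nat)
    (A : 'M[R]_n) (B : 'M[R]_(n, m)) (s : 'cV[R]_n)
    (Hx : 'M[R]_(d, n)) (Hu : 'M[R]_(d, m)) (h : 'cV[R]_d)
    (F : 'M[R]_(q, n)) (f : 'cV[R]_q) (xinit : 'cV[R]_n)
    (xd : nat -> 'cV[R]_n) (ud : nat -> 'cV[R]_m)
    (xs : 'cV[R]_(T.+1 * n)) (us : 'cV[R]_(T.+1 * m)) :
  controllable A B -> (n + T.+1 + 1 <= L)%N ->
  (forall t, (t.+1 < L)%N -> xd t.+1 = A *m xd t + B *m ud t + s) ->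
  pers_exc (n + T.+1 + 1) L ud ->
  feasP3 T L xd ud Hx Hu h F f xinit xs us <-> feasMPC T A B s Hx Hu h F f xinit xs us.
Proof.
move=> ctrl_AB le_L traj pe_ud; have le_TL : (T.+1 <= L)%N by lia.
split=> [[G [g [Exu [[_ G1] [_ g1]] cons x0 term]]] | [dyn cons x0 term]].
  rewrite -mulmxA mul_row_col const_mx11 mulmx1 mul_col_mx in Exu.
  have [Exs Eus] := eq_col_mx Exu; split=> //; last exact/lev_bdiag.
  move=> t lt_tT; rewrite Exs Eus.
  exact: (hankel_mul_traj traj le_TL (affine_param_sum1 (blk T n xs 0) G1 g1) lt_tT).
have [al [Exs Eus al1]] := traj_hankel_comb traj ctrl_AB le_L pe_ud dyn.
have [M [HM1 _ M0]] := data_mx_solvable traj 1%:M 0 0 ctrl_AB le_L pe_ud.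
have Hal : hankel1 T L xd *m al = blk T n xs 0 by rewrite -Exs blk0_hankel_mul.
have [G [g [GG Lg Eal]]] := affine_param_exists HM1 M0 Hal al1.
exists G, g; split=> //; last exact/lev_bdiag.
by rewrite -mulmxA mul_row_col const_mx11 mulmx1 Eal mul_col_mx Exs Eus.
Qed.

Theorem mainTheorem4 (R : rcfType) (n m d q T L : nat) (p : pnorm_kind)
  (A : 'M[R]_n) (B : 'M[R]_(n, m)) (s : 'cV[R]_n)
  (Q : 'M[R]_n) (Rw : 'M[R]_m) (P : 'M[R]_n)
  (Hx : 'M[R]_(d, n)) (Hu : 'M[R]_(d, m)) (h : 'cV[R]_d)
  (F : 'M[R]_(q, n)) (f : 'cV[R]_q) (xinit : 'cV[R]_n)
  (xd : nat -> 'cV[R]_n) (ud : nat -> 'cV[R]_m)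
  (xs : 'cV[R]_(T.+1 * n)) (us : 'cV[R]_(T.+1 * m)) :
  weights_ok p Q Rw P ->
  controllable A B ->
  (n + T.+1 + 1 <= L)%N ->
  (forall t : nat, (t.+1 < L)%N -> xd t.+1 = A *m xd t + B *m ud t + s) ->
  pers_exc (n + T.+1 + 1) L ud ->
  optimal (feasP3 T L xd ud Hx Hu h F f xinit) (cost p T Q Rw P) xs us <->
  optimal (feasMPC T A B s Hx Hu h F f xinit) (cost p T Q Rw P) xs us.
Proof.
move=> _ ctrl_AB le_L traj pe_ud; apply: optimal_iff => xs' us'.
exact: feasP3_iff_feasMPC.
Qed.
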